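(* As $\omega\to0^+$, the fundamental solution $\boldsymbol\Gamma^\omega$ has the asymptotic expansion $$\boldsymbol\Gamma^\omega(\mathbf{x})=\boldsymbol\Gamma(\mathbf{x})+\gamma_\omega\mathbf{I}_2+\omega^2\ln\omega\,\rho\boldsymbol\Gamma_1(\mathbf{x})+\omega^2\rho\ln\sqrt\rho\,\boldsymbol\Gamma_1(\mathbf{x})+\omega^2\rho\boldsymbol\Gamma_2(\mathbf{x})+\mathcal{O}(\omega^4\ln\omega+\omega^4),$$ where $\boldsymbol\Gamma_1(\mathbf{x})=\beta_2|\mathbf{x}|^2\mathbf{I}_2+\beta_3\mathbf{x}\mathbf{x}^T$, $\boldsymbol\Gamma_2(\mathbf{x})=\beta_1|\mathbf{x}|^2\mathbf{I}_2+\beta_2\ln|\mathbf{x}||\mathbf{x}|^2\mathbf{I}_2+\beta_3\ln|\mathbf{x}|\mathbf{x}\mathbf{x}^T+\beta_4\mathbf{x}\mathbf{x}^T$, $\gamma_\omega=\alpha_1\ln(\sqrt\rho\,\omega)+\alpha$ with $\alpha=\frac{\alpha_1}2E_c+\frac{\alpha_2}2-\frac1{8\pi}\big(\frac1\mu\ln\mu+\frac1{2\mu+\lambda}\ln(2\mu+\lambda)\big)$, and $\beta_1=(\frac12E_c-1)\beta_2-\frac18\beta_3+\frac1{2^6\pi}\big(\frac3{\mu^2}\ln\mu+\frac1{(2\mu+\lambda)^2}\ln(2\mu+\lambda)\big)$, $\beta_2=-\frac1{2^5\pi}\big(\frac3{\mu^2}+\frac1{(2\mu+\lambda)^2}\big)$,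 $\beta_3=\frac1{2^4\pi}\big(\frac1{\mu^2}-\frac1{(2\mu+\lambda)^2}\big)$, $\beta_4=\frac14(2E_c-3)\beta_3-\frac1{2^5\pi}\big(\frac1{\mu^2}\ln\mu-\frac1{(2\mu+\lambda)^2}\ln(2\mu+\lambda)\big)$.
   Context: Lamé constants $\lambda,\mu$, density $\rho>0$; $c_s=\sqrt{\mu/\rho}$, $c_p=\sqrt{(\lambda+2\mu)/\rho}$, $k_s=\omega/c_s$, $k_p=\omega/c_p$. The fundamental solution of $\mu\Delta+(\lambda+\mu)\nabla\nabla\cdot+\omega^2\rho$ in $\mathbb{R}^2$ is $\boldsymbol\Gamma^\omega(\mathbf{x})=-\frac{\mathrm{i}}{4\mu}H_0^{(1)}(k_s|\mathbf{x}|)\mathbf{I}_2+\frac{\mathrm{i}}{4\omega^2\rho}\nabla\nabla\big(H_0^{(1)}(k_p|\mathbf{x}|)-H_0^{(1)}(k_s|\mathbf{x}|)\big)$. $\boldsymbol\Gamma(\mathbf{x})=\alpha_1\ln|\mathbf{x}|\mathbf{I}_2-\alpha_2\frac{\mathbf{x}\mathbf{x}^T}{|\mathbf{x}|^2}$, $\alpha_1=\frac1{4\pi}(\frac1\mu+\frac1{2\mu+\lambda})$, $\alpha_2=\frac1{4\pi}(\frac1\mu-\frac1{2\mu+\lambda})$. $E_c=2\gamma-\mathrm{i}\pi-2\ln2$, $\gamma$ Euler's constant. *)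

From Stdlib Require Import Reals Factorial.
From Coquelicot Require Import Coquelicot.
Open Scope R_scope.

Definition harmonic (n : nat) : R := sum_f 1 n (fun m => / INR m).
Definition harm (k : nat) : R := match k with O => 0 | S n => harmonic (S n) end.
Definition euler_gamma : R := real (Lim_seq (fun n => harm n - ln (INR n))).

Definition J0 (t : R) : R :=
  Series (fun k => (-1) ^ k * (t / 2) ^ (2 * k) / (INR (Factorial.fact k)) ^ 2).
Definition Y0 (t : R) : R :=
  2 / PI * (ln (t / 2) + euler_gamma) * J0 t
  + 2 / PI * Series (fun k => (-1) ^ (k + 1) * harm k * (t / 2) ^ (2 * k) / (INR (Factorial.fact k)) ^ 2).
Definition H0 (t : R) : C := (RtoC (J0 t) + Ci * RtoC (Y0 t))%C.

Definition coord (x : R * R) (i : nat) : R := if Nat.eqb i 0 then fst x else snd x.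
Definition norm2 (x : R * R) : R := sqrt (fst x ^ 2 + snd x ^ 2).
Definition kron (i j : nat) : R := if Nat.eqb i j then 1 else 0.

Definition partial (f : R * R -> R) (i : nat) (y : R * R) : R :=
  if Nat.eqb i 0 then Derive (fun t => f (t, snd y)) (fst y)
  else Derive (fun t => f (fst y, t)) (snd y).
Definition hess (f : R * R -> R) (i j : nat) (y : R * R) : R :=
  partial (fun z => partial f j z) i y.

Definition k_s (lam mu rho om : R) : R := om / sqrt (mu / rho).
Definition k_p (lam mu rho om : R) : R := om / sqrt ((lam + 2 * mu) / rho).

(** Fundamental solution Gamma^omega (entry (i,j)); the Hessian of the complex
    function H0(k_p|x|) - H0(k_s|x|) is the Hessian of its real part plus i times
    the Hessian of its imaginary part. *)
Definition Gamma_om (lam mu rho om : R) (x : R * R) (i j : nat) : C :=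
  let ks := k_s lam mu rho om in
  let kp := k_p lam mu rho om in
  ( - (Ci / RtoC (4 * mu)%R) * H0 (ks * norm2 x)%R * RtoC (kron i j)
    + Ci / RtoC (4 * om ^ 2 * rho)%R *
      ( RtoC (hess (fun y => (J0 (kp * norm2 y) - J0 (ks * norm2 y))%R) i j x)
        + Ci * RtoC (hess (fun y => (Y0 (kp * norm2 y) - Y0 (ks * norm2 y))%R) i j x)) )%C.

Definition alpha1 (lam mu : R) : R := / (4 * PI) * (/ mu + / (2 * mu + lam)).
Definition alpha2 (lam mu : R) : R := / (4 * PI) * (/ mu - / (2 * mu + lam)).

Definition Gamma0 (lam mu : R) (x : R * R) (i j : nat) : R :=
  alpha1 lam mu * ln (norm2 x) * kron i j
  - alpha2 lam mu * coord x i * coord x j / (norm2 x) ^ 2.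

Definition E_c : C := (RtoC (2 * euler_gamma)%R - Ci * RtoC PI - RtoC (2 * ln 2)%R)%C.

Definition alpha (lam mu : R) : C :=
  (RtoC (alpha1 lam mu) / 2 * E_c + RtoC (alpha2 lam mu / 2
   - / (8 * PI) * (/ mu * ln mu + / (2 * mu + lam) * ln (2 * mu + lam))))%C.

Definition beta2 (lam mu : R) : R :=
  - / (2 ^ 5 * PI) * (3 / mu ^ 2 + / (2 * mu + lam) ^ 2).
Definition beta3 (lam mu : R) : R :=
  / (2 ^ 4 * PI) * (/ mu ^ 2 - / (2 * mu + lam) ^ 2).
Definition beta1 (lam mu : R) : C :=
  ((E_c / 2 - 1) * RtoC (beta2 lam mu)
   + RtoC (- / 8 * beta3 lam mu
           + / (2 ^ 6 * PI) * (3 / mu ^ 2 * ln mu + / (2 * mu + lam) ^ 2 * ln (2 * mu + lam))))%C.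
Definition beta4 (lam mu : R) : C :=
  (/ 4 * (2 * E_c - 3) * RtoC (beta3 lam mu)
   - RtoC (/ (2 ^ 5 * PI) * (/ mu ^ 2 * ln mu - / (2 * mu + lam) ^ 2 * ln (2 * mu + lam))))%C.

Definition Gamma1 (lam mu : R) (x : R * R) (i j : nat) : R :=
  beta2 lam mu * (norm2 x) ^ 2 * kron i j + beta3 lam mu * coord x i * coord x j.

Definition Gamma2 (lam mu : R) (x : R * R) (i j : nat) : C :=
  (beta1 lam mu * RtoC ((norm2 x) ^ 2 * kron i j)
   + RtoC (beta2 lam mu * ln (norm2 x) * (norm2 x) ^ 2 * kron i j
           + beta3 lam mu * ln (norm2 x) * coord x i * coord x j)
   + beta4 lam mu * RtoC (coord x i * coord x j))%C.

Definition gamma_om (lam mu rho om : R) : C :=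
  (RtoC (alpha1 lam mu * ln (sqrt rho * om)) + alpha lam mu)%C.

Definition expansion (lam mu rho om : R) (x : R * R) (i j : nat) : C :=
  (RtoC (Gamma0 lam mu x i j) + gamma_om lam mu rho om * RtoC (kron i j)
   + RtoC (om ^ 2 * ln om * rho * Gamma1 lam mu x i j)
   + RtoC (om ^ 2 * rho * ln (sqrt rho) * Gamma1 lam mu x i j)
   + RtoC (om ^ 2 * rho) * Gamma2 lam mu x i j)%C.

(** Every entry of Γ^ω is built from J0 and Y0 at k|x|. Writing u = t²/4, one has
    J0(t) = Jp(u) and Y0(t) = (1/π) ln u Jp(u) + (2/π)(γ Jp(u) + Hp(u)) with entire power
    series Jp, Hp, and the Hessian of a radial function G(|x|²) is 4 G'' x_i x_j + 2 G' δ_ij.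
    Hence Γ^ω is an explicit combination of Jp, Hp and their first two derivatives at
    s = k_s²|x|²/4 = ω² ρ|x|²/(4μ) and p = k_p²|x|²/4.  Truncating these series after their
    terms of order u² leaves Taylor tails that are entire, hence bounded near 0.  The
    truncated part reproduces the expansion exactly (the 1/u² and 1/u singularities cancel
    between the s and p contributions), and what remains is ω⁴ (U(ω²) + ln ω V(ω²)) in the
    real part and ω⁴ W(ω²) in the imaginary part, with U, V, W continuous at 0. *)

From Stdlib Require Import Reals Lra Lia Factorial.
From Coquelicot Require Import Coquelicot.
Open Scope R_scope.

(** * Power series with coefficients O(1/k!) *)

Definition fact_bounded (a : nat -> R) : Prop :=
  exists C, forall k, Rabs (a k) <= C / INR (fact k).

Definition PSeries_tail (a : nat -> R) (n : nat) : R -> R := PSeries (PS_decr_n a n).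

Section FactBounded.
Variable a : nat -> R.
Hypothesis Ha : fact_bounded a.

Lemma fact_bounded_PS_decr_n n : fact_bounded (PS_decr_n a n).
Proof.
  destruct Ha as [C HC]; exists C; intros k; unfold PS_decr_n.
  assert (HC0 : 0 <= C)
    by (specialize (HC 0%nat); simpl in HC; pose proof (Rabs_pos (a 0%nat)); lra).
  eapply Rle_trans; [apply HC|].
  apply Rmult_le_compat_l; [exact HC0|].
  apply Rinv_le_contravar; [apply INR_fact_lt_0|].
  apply le_INR, fact_le; lia.
Qed.

Lemma fact_bounded_PS_derive : fact_bounded (PS_derive a).
Proof.
  destruct Ha as [C HC]; exists C; intros k; unfold PS_derive.
  specialize (HC (S k)).
  change (fact (S k)) with (S k * fact k)%nat in HC; rewrite mult_INR in HC.
  pose proof (INR_fact_lt_0 k); pose proof (lt_0_INR (S k) ltac:(lia)).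
  rewrite Rabs_mult, Rabs_right by (apply Rle_ge, pos_INR).
  apply (Rmult_le_compat_l (INR (S k))) in HC; [|lra].
  eapply Rle_trans; [exact HC|]; right; field; lra.
Qed.

Lemma fact_bounded_CV_disk r : CV_disk a r.
Proof.
  destruct Ha as [C HC]; unfold CV_disk.
  eapply (@ex_series_le R_AbsRing R_CompleteNormedModule
            _ (fun n => C * (Rabs r ^ n / INR (fact n)))).
  - intros n; simpl; unfold abs; simpl.
    rewrite Rabs_Rabsolu, Rabs_mult, <- RPow_abs.
    replace (C * (Rabs r ^ n / INR (fact n))) with (C / INR (fact n) * Rabs r ^ n)
      by (unfold Rdiv; ring).
    apply Rmult_le_compat_r; [apply pow_le, Rabs_pos | apply HC].
  - apply (ex_series_scal_l (V := R_NormedModule)).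
    exists (exp (Rabs r)).
    eapply is_series_ext; [|apply is_exp_Reals].
    intros n; apply (f_equal (fun y => y / _)), pow_n_pow.
Qed.

Lemma fact_bounded_CV_radius u : Rbar_lt (Rabs u) (CV_radius a).
Proof.
  unfold CV_radius.
  destruct (Lub_Rbar_correct (CV_disk a)) as [Hub _].
  specialize (Hub (Rabs u + 1) (fact_bounded_CV_disk _)).
  destruct (Lub_Rbar (CV_disk a)); simpl in *; auto; lra.
Qed.

Lemma PSeries_taylor n u :
  PSeries a u = sum_f_R0 (fun k => a k * u ^ k) n + u ^ S n * PSeries_tail a (S n) u.
Proof. apply PSeries_decr_n, CV_radius_inside, fact_bounded_CV_radius. Qed.

Lemma is_derive_PSeries_fact_bounded u : is_derive (PSeries a) u (PSeries (PS_derive a) u).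
Proof. apply is_derive_PSeries, fact_bounded_CV_radius. Qed.

End FactBounded.

Lemma ex_derive_PSeries_tail a n u : fact_bounded a -> ex_derive (PSeries_tail a n) u.
Proof.
  intros Ha; eexists; apply is_derive_PSeries_fact_bounded, fact_bounded_PS_decr_n, Ha.
Qed.

(** * The series of J0 and Y0 *)

Definition J0_coef (k : nat) : R := (-1) ^ k / INR (fact k) ^ 2.
Definition harm_coef (k : nat) : R := (-1) ^ (k + 1) * harm k / INR (fact k) ^ 2.

Lemma harm_bounds k : 0 <= harm k <= INR k.
Proof.
  destruct k as [|n]; [simpl; lra|].
  unfold harm, harmonic, sum_f; replace (S n - 1)%nat with n by lia.
  induction n as [|n IH]; [simpl; lra|].
  rewrite tech5, (S_INR (S n)).
  assert (0 < / INR (S n + 1)) by (apply Rinv_0_lt_compat, lt_0_INR; lia).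
  assert (/ INR (S n + 1) <= 1).
  { rewrite <- Rinv_1; apply Rinv_le_contravar; [lra|].
    apply (le_INR 1); lia. }
  lra.
Qed.

Lemma le_fact k : (k <= fact k)%nat.
Proof. induction k; simpl; [lia|]. pose proof (lt_O_fact k); nia. Qed.

Lemma signed_over_fact_sq_bound (e : nat) m k : 0 <= m <= INR (fact k) ->
  Rabs ((-1) ^ e * m / INR (fact k) ^ 2) <= 1 / INR (fact k).
Proof.
  intros Hm; pose proof (INR_fact_lt_0 k).
  unfold Rdiv; rewrite !Rabs_mult, pow_1_abs, Rabs_right, Rabs_inv, Rabs_right by nra.
  apply (Rmult_le_reg_r (INR (fact k) ^ 2)); [nra|].
  field_simplify; nra.
Qed.

Lemma fact_bounded_J0_coef : fact_bounded J0_coef.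
Proof.
  exists 1; intros k; unfold J0_coef.
  rewrite <- (Rmult_1_r ((-1) ^ k)).
  apply signed_over_fact_sq_bound.
  split; [lra|]; apply (le_INR 1), lt_O_fact.
Qed.

Lemma fact_bounded_harm_coef : fact_bounded harm_coef.
Proof.
  exists 1; intros k; unfold harm_coef.
  apply signed_over_fact_sq_bound.
  pose proof (harm_bounds k); pose proof (le_INR _ _ (le_fact k)); lra.
Qed.

Definition Jp : R -> R := PSeries J0_coef.
Definition Jp1 : R -> R := PSeries (PS_derive J0_coef).
Definition Jp2 : R -> R := PSeries (PS_derive (PS_derive J0_coef)).
Definition Hp : R -> R := PSeries harm_coef.
Definition Hp1 : R -> R := PSeries (PS_derive harm_coef).
Definition Hp2 : R -> R := PSeries (PS_derive (PS_derive harm_coef)).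

Definition Yp (v : R) : R :=
  / PI * ln v * Jp v + 2 / PI * (euler_gamma * Jp v + Hp v).
Definition Yp1 (v : R) : R :=
  / PI * (Jp v / v + ln v * Jp1 v) + 2 / PI * (euler_gamma * Jp1 v + Hp1 v).
Definition Yp2 (v : R) : R :=
  / PI * (- Jp v / v ^ 2 + 2 * Jp1 v / v + ln v * Jp2 v)
  + 2 / PI * (euler_gamma * Jp2 v + Hp2 v).

Lemma J0_Jp t : J0 t = Jp (t ^ 2 / 4).
Proof.
  unfold J0, Jp, PSeries; apply Series_ext; intros k.
  rewrite pow_mult; replace ((t / 2) ^ 2) with (t ^ 2 / 4) by field.
  unfold J0_coef; field; apply INR_fact_neq_0.
Qed.

Lemma Y0_Yp t : 0 < t -> Y0 t = Yp (t ^ 2 / 4).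
Proof.
  intros Ht.
  assert (Hser : Series (fun k => (-1) ^ (k + 1) * harm k * (t / 2) ^ (2 * k) / INR (fact k) ^ 2)
                 = Hp (t ^ 2 / 4)).
  { unfold Hp, PSeries; apply Series_ext; intros k.
    rewrite pow_mult; replace ((t / 2) ^ 2) with (t ^ 2 / 4) by field.
    unfold harm_coef; field; apply INR_fact_neq_0. }
  unfold Y0, Yp; rewrite Hser, <- J0_Jp.
  replace (t ^ 2 / 4) with ((t / 2) ^ 2) by field.
  rewrite ln_pow by lra; simpl INR.
  field; apply PI_neq0.
Qed.

Lemma is_derive_Jp u : is_derive Jp u (Jp1 u).
Proof. apply is_derive_PSeries_fact_bounded, fact_bounded_J0_coef. Qed.
Lemma is_derive_Jp1 u : is_derive Jp1 u (Jp2 u).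
Proof. apply is_derive_PSeries_fact_bounded, fact_bounded_PS_derive, fact_bounded_J0_coef. Qed.
Lemma is_derive_Hp u : is_derive Hp u (Hp1 u).
Proof. apply is_derive_PSeries_fact_bounded, fact_bounded_harm_coef. Qed.
Lemma is_derive_Hp1 u : is_derive Hp1 u (Hp2 u).
Proof. apply is_derive_PSeries_fact_bounded, fact_bounded_PS_derive, fact_bounded_harm_coef. Qed.

Ltac profile_side_conditions :=
  repeat match goal with
  | |- _ /\ _ => split
  | |- True => exact I
  | |- 0 < _ => assumption
  | |- _ <> 0 => apply Rgt_not_eq; assumption
  | |- ex_derive (fun x => Jp x) _ => eexists; apply is_derive_Jp
  | |- ex_derive (fun x => Jp1 x) _ => eexists; apply is_derive_Jp1
  | |- ex_derive (fun x => Hp x) _ => eexists; apply is_derive_Hp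
  | |- ex_derive (fun x => Hp1 x) _ => eexists; apply is_derive_Hp1
  end.

Ltac profile_derivatives :=
  repeat first
    [ rewrite (is_derive_unique (fun x => Jp x) _ _ (is_derive_Jp _))
    | rewrite (is_derive_unique (fun x => Jp1 x) _ _ (is_derive_Jp1 _))
    | rewrite (is_derive_unique (fun x => Hp x) _ _ (is_derive_Hp _))
    | rewrite (is_derive_unique (fun x => Hp1 x) _ _ (is_derive_Hp1 _)) ].

Lemma is_derive_Yp v : 0 < v -> is_derive Yp v (Yp1 v).
Proof.
  intros Hv; unfold Yp; auto_derive; [profile_side_conditions|].
  profile_derivatives; unfold Yp1; field; split; [apply PI_neq0 | lra].
Qed.

Lemma is_derive_Yp1 v : 0 < v -> is_derive Yp1 v (Yp2 v).
Proof.
  intros Hv; unfold Yp1; auto_derive; [profile_side_conditions|].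
  profile_derivatives; unfold Yp2; field; split; [apply PI_neq0 | lra].
Qed.

Definition Jrem (v : R) : R := 1 / 4 + v * PSeries_tail J0_coef 3 v.
Definition Jrem1 : R -> R := PSeries_tail (PS_derive J0_coef) 2.
Definition Jrem2 : R -> R := PSeries_tail (PS_derive (PS_derive J0_coef)) 1.
Definition Hrem : R -> R := PSeries_tail harm_coef 2.
Definition Hrem1 : R -> R := PSeries_tail (PS_derive harm_coef) 2.
Definition Hrem2 : R -> R := PSeries_tail (PS_derive (PS_derive harm_coef)) 1.

Lemma Jp_taylor u : Jp u = 1 - u + u ^ 2 * Jrem u.
Proof.
  unfold Jp, Jrem; rewrite (PSeries_taylor _ fact_bounded_J0_coef 2).
  simpl; unfold J0_coef; simpl; field.
Qed.
Lemma Jp1_taylor u : Jp1 u = -1 + u / 2 + u ^ 2 * Jrem1 u.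
Proof.
  unfold Jp1, Jrem1; rewrite (PSeries_taylor _ (fact_bounded_PS_derive _ fact_bounded_J0_coef) 1).
  simpl; unfold PS_derive, J0_coef; simpl; field.
Qed.
Lemma Jp2_taylor u : Jp2 u = 1 / 2 + u * Jrem2 u.
Proof.
  unfold Jp2, Jrem2.
  rewrite (PSeries_taylor _ (fact_bounded_PS_derive _ (fact_bounded_PS_derive _ fact_bounded_J0_coef)) 0).
  simpl; unfold PS_derive, J0_coef; simpl; field.
Qed.
Lemma Hp_taylor u : Hp u = u + u ^ 2 * Hrem u.
Proof.
  unfold Hp, Hrem; rewrite (PSeries_taylor _ fact_bounded_harm_coef 1).
  simpl; unfold harm_coef, harm, harmonic, sum_f; simpl; field.
Qed.
Lemma Hp1_taylor u : Hp1 u = 1 - 3 / 4 * u + u ^ 2 * Hrem1 u.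
Proof.
  unfold Hp1, Hrem1; rewrite (PSeries_taylor _ (fact_bounded_PS_derive _ fact_bounded_harm_coef) 1).
  simpl; unfold PS_derive, harm_coef, harm, harmonic, sum_f; simpl; field.
Qed.
Lemma Hp2_taylor u : Hp2 u = -3 / 4 + u * Hrem2 u.
Proof.
  unfold Hp2, Hrem2.
  rewrite (PSeries_taylor _ (fact_bounded_PS_derive _ (fact_bounded_PS_derive _ fact_bounded_harm_coef)) 0).
  simpl; unfold PS_derive, harm_coef, harm, harmonic, sum_f; simpl; field.
Qed.

(** The logarithm is a separate argument [L] so that the remainders are affine in ln ω. *)
Definition Yrem (L v : R) : R :=
  / PI * L * Jrem v + 2 / PI * (euler_gamma * Jrem v + Hrem v).
Definition Yrem1 (L v : R) : R :=
  / PI * (PSeries_tail J0_coef 3 v + L * Jrem1 v) + 2 / PI * (euler_gamma * Jrem1 v + Hrem1 v).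
Definition Yrem2 (L v : R) : R :=
  / PI * (- PSeries_tail J0_coef 3 v + 2 * Jrem1 v + L * Jrem2 v)
  + 2 / PI * (euler_gamma * Jrem2 v + Hrem2 v).

Lemma Yp_taylor v : 0 < v ->
  Yp v = / PI * ln v * (1 - v) + 2 / PI * (euler_gamma * (1 - v) + v) + v ^ 2 * Yrem (ln v) v.
Proof.
  intros Hv; unfold Yp, Yrem; rewrite Jp_taylor, Hp_taylor; field; apply PI_neq0.
Qed.

Lemma Yp1_taylor v : 0 < v ->
  Yp1 v = / PI * (/ v - 1 + v / 4 + ln v * (-1 + v / 2))
          + 2 / PI * (euler_gamma * (-1 + v / 2) + 1 - 3 / 4 * v) + v ^ 2 * Yrem1 (ln v) v.
Proof.
  intros Hv; unfold Yp1, Yrem1; rewrite Jp_taylor, Jp1_taylor, Hp1_taylor; unfold Jrem.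
  field; split; [apply PI_neq0 | lra].
Qed.

Lemma Yp2_taylor v : 0 < v ->
  Yp2 v = / PI * (- / v ^ 2 - / v + 3 / 4 + ln v / 2) + 2 / PI * (euler_gamma / 2 - 3 / 4)
          + v * Yrem2 (ln v) v.
Proof.
  intros Hv; unfold Yp2, Yrem2; rewrite Jp_taylor, Jp1_taylor, Jp2_taylor, Hp2_taylor; unfold Jrem.
  field; split; [apply PI_neq0 | lra].
Qed.

Lemma ex_derive_Jrem v : ex_derive Jrem v.
Proof.
  unfold Jrem; auto_derive; repeat split; auto.
  apply ex_derive_PSeries_tail, fact_bounded_J0_coef.
Qed.
Lemma ex_derive_Jrem1 v : ex_derive Jrem1 v.
Proof. apply ex_derive_PSeries_tail, fact_bounded_PS_derive, fact_bounded_J0_coef. Qed.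
Lemma ex_derive_Jrem2 v : ex_derive Jrem2 v.
Proof. apply ex_derive_PSeries_tail, fact_bounded_PS_derive, fact_bounded_PS_derive, fact_bounded_J0_coef. Qed.

Lemma ex_derive_Yrem L v : ex_derive (Yrem L) v.
Proof.
  unfold Yrem, Hrem; auto_derive; repeat split; auto using ex_derive_Jrem.
  apply ex_derive_PSeries_tail, fact_bounded_harm_coef.
Qed.
Lemma ex_derive_Yrem1 L v : ex_derive (Yrem1 L) v.
Proof.
  unfold Yrem1, Hrem1; auto_derive; repeat split; auto using ex_derive_Jrem1.
  - apply ex_derive_PSeries_tail, fact_bounded_J0_coef.
  - apply ex_derive_PSeries_tail, fact_bounded_PS_derive, fact_bounded_harm_coef.
Qed.
Lemma ex_derive_Yrem2 L v : ex_derive (Yrem2 L) v.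
Proof.
  unfold Yrem2, Hrem2; auto_derive; repeat split; auto using ex_derive_Jrem1, ex_derive_Jrem2.
  - apply ex_derive_PSeries_tail, fact_bounded_J0_coef.
  - apply ex_derive_PSeries_tail, fact_bounded_PS_derive, fact_bounded_PS_derive, fact_bounded_harm_coef.
Qed.

(** * Hessians of radial functions *)

Definition sqnorm (y : R * R) : R := fst y ^ 2 + snd y ^ 2.

Lemma sqnorm_pos x : x <> (0, 0) -> 0 < sqnorm x.
Proof.
  destruct x as [a b]; unfold sqnorm; simpl; intros Hx.
  destruct (Rle_or_lt (a ^ 2 + b ^ 2) 0) as [H|H]; auto.
  exfalso; apply Hx; f_equal; nra.
Qed.

Definition along (y : R * R) (i : nat) (t : R) : R * R :=
  if Nat.eqb i 0 then (t, snd y) else (fst y, t).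

Lemma partial_along f i y : partial f i y = Derive (fun t => f (along y i t)) (coord y i).
Proof. unfold partial, along, coord; destruct (Nat.eqb i 0); reflexivity. Qed.

Lemma along_coord y i : along y i (coord y i) = y.
Proof. destruct y; unfold along, coord; destruct (Nat.eqb i 0); reflexivity. Qed.

Lemma sqnorm_along y i t : sqnorm (along y i t) = t ^ 2 + (sqnorm y - coord y i ^ 2).
Proof. unfold sqnorm, along, coord; destruct (Nat.eqb i 0); simpl; ring. Qed.

Lemma is_derive_coord_along y i j : (i < 2)%nat -> (j < 2)%nat ->
  is_derive (fun t => coord (along y i t) j) (coord y i) (kron i j).
Proof.
  intros Hi Hj; unfold coord, along, kron.
  destruct i as [|[|]]; destruct j as [|[|]]; try lia; simpl; auto_derive; auto.
Qed.

Lemma locally_sqnorm_along_pos y i : 0 < sqnorm y ->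
  locally (coord y i) (fun t => 0 < sqnorm (along y i t)).
Proof.
  intros Hy.
  assert (Hc : continuous (fun t => t ^ 2 + (sqnorm y - coord y i ^ 2)) (coord y i))
    by (apply (ex_derive_continuous (K := R_AbsRing) (V := R_NormedModule)); auto_derive; exact I).
  apply (filter_imp (fun t => 0 < t ^ 2 + (sqnorm y - coord y i ^ 2))).
  - intros t; rewrite sqnorm_along; auto.
  - apply (Hc (fun u => 0 < u)), open_gt; lra.
Qed.

Lemma is_derive_radial_along (G G1 : R -> R) y i :
  (forall u, 0 < u -> is_derive G u (G1 u)) -> 0 < sqnorm y ->
  is_derive (fun t => G (sqnorm (along y i t))) (coord y i) (2 * G1 (sqnorm y) * coord y i).
Proof.
  intros dG Hy.
  apply (is_derive_ext (fun t => G (t ^ 2 + (sqnorm y - coord y i ^ 2))));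
    [intros t; rewrite sqnorm_along; reflexivity|].
  set (c := sqnorm y - coord y i ^ 2).
  assert (Hin : is_derive (fun t => t ^ 2 + c) (coord y i) (2 * coord y i))
    by (auto_derive; [exact I | ring]).
  assert (Hout : is_derive G (coord y i ^ 2 + c) (G1 (sqnorm y)))
    by (unfold c; replace (coord y i ^ 2 + _) with (sqnorm y) by ring; apply dG, Hy).
  replace (2 * G1 (sqnorm y) * coord y i) with (scal (2 * coord y i) (G1 (sqnorm y)))
    by (unfold scal; simpl; unfold mult; simpl; ring).
  exact (is_derive_comp G (fun t => t ^ 2 + c) _ _ _ Hout Hin).
Qed.

Section RadialHessian.
Variables G G1 G2 : R -> R.
Hypothesis dG : forall u, 0 < u -> is_derive G u (G1 u).
Hypothesis dG1 : forall u, 0 < u -> is_derive G1 u (G2 u).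
Variable f : R * R -> R.
Hypothesis f_radial : forall z, 0 < sqnorm z -> f z = G (sqnorm z).

Lemma partial_radial y i : 0 < sqnorm y -> partial f i y = 2 * G1 (sqnorm y) * coord y i.
Proof.
  intros Hy; rewrite partial_along; apply is_derive_unique.
  apply (is_derive_ext_loc (fun t => G (sqnorm (along y i t)))).
  - apply (filter_imp (fun t => 0 < sqnorm (along y i t))); [|apply locally_sqnorm_along_pos, Hy].
    intros t Ht; rewrite f_radial by exact Ht; reflexivity.
  - apply is_derive_radial_along; assumption.
Qed.

Lemma hess_radial y i j : 0 < sqnorm y -> (i < 2)%nat -> (j < 2)%nat ->
  hess f i j y = 4 * G2 (sqnorm y) * coord y i * coord y j + 2 * G1 (sqnorm y) * kron i j.
Proof.
  intros Hy Hi Hj; unfold hess; rewrite partial_along; apply is_derive_unique.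
  apply (is_derive_ext_loc (fun t => 2 * G1 (sqnorm (along y i t)) * coord (along y i t) j)).
  - apply (filter_imp (fun t => 0 < sqnorm (along y i t))); [|apply locally_sqnorm_along_pos, Hy].
    intros t Ht; rewrite partial_radial by exact Ht; reflexivity.
  - pose proof (is_derive_scal _ _ 2 _ (is_derive_radial_along G1 G2 y i dG1 Hy)) as HG1.
    pose proof (is_derive_mult _ _ _ _ _ HG1 (is_derive_coord_along y i j Hi Hj) Rmult_comm) as H.
    cbv beta in H; rewrite along_coord in H.
    replace (4 * G2 (sqnorm y) * coord y i * coord y j + 2 * G1 (sqnorm y) * kron i j)
      with (plus (mult (2 * (2 * G2 (sqnorm y) * coord y i)) (coord y j))
                 (mult (2 * G1 (sqnorm y)) (kron i j)))
      by (unfold plus, mult; simpl; ring).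
    exact H.
Qed.

End RadialHessian.

Lemma is_derive_scaled (G G1 : R -> R) k u :
  (forall v, 0 < v -> is_derive G v (G1 v)) -> k <> 0 -> 0 < u ->
  is_derive (fun u => G (k ^ 2 * u / 4)) u (k ^ 2 / 4 * G1 (k ^ 2 * u / 4)).
Proof.
  intros dG Hk Hu.
  assert (Hk2 : 0 < k ^ 2) by (apply pow2_gt_0, Hk).
  assert (Hin : is_derive (fun u => k ^ 2 * u / 4) u (k ^ 2 / 4)) by (auto_derive; [exact I | field]).
  assert (Hout : is_derive G (k ^ 2 * u / 4) (G1 (k ^ 2 * u / 4))) by (apply dG; nra).
  exact (is_derive_comp G (fun u => k ^ 2 * u / 4) u _ _ Hout Hin).
Qed.

Lemma hess_profile_difference (F G G1 G2 : R -> R) kp ks y i j :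
  (forall t, 0 < t -> F t = G (t ^ 2 / 4)) ->
  (forall u, 0 < u -> is_derive G u (G1 u)) -> (forall u, 0 < u -> is_derive G1 u (G2 u)) ->
  0 < kp -> 0 < ks -> 0 < sqnorm y -> (i < 2)%nat -> (j < 2)%nat ->
  hess (fun z => F (kp * norm2 z) - F (ks * norm2 z)) i j y =
    ((kp ^ 2) ^ 2 * G2 (kp ^ 2 * sqnorm y / 4) - (ks ^ 2) ^ 2 * G2 (ks ^ 2 * sqnorm y / 4)) / 4
      * coord y i * coord y j
    + (kp ^ 2 * G1 (kp ^ 2 * sqnorm y / 4) - ks ^ 2 * G1 (ks ^ 2 * sqnorm y / 4)) / 2 * kron i j.
Proof.
  intros HF dG dG1 Hkp Hks Hy Hi Hj.
  rewrite (hess_radial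
             (fun u => G (kp ^ 2 * u / 4) - G (ks ^ 2 * u / 4))
             (fun u => kp ^ 2 / 4 * G1 (kp ^ 2 * u / 4) - ks ^ 2 / 4 * G1 (ks ^ 2 * u / 4))
             (fun u => kp ^ 2 / 4 * (kp ^ 2 / 4 * G2 (kp ^ 2 * u / 4))
                       - ks ^ 2 / 4 * (ks ^ 2 / 4 * G2 (ks ^ 2 * u / 4)))); try assumption.
  - field.
  - intros u Hu; apply (is_derive_minus (fun u => G (kp ^ 2 * u / 4)) (fun u => G (ks ^ 2 * u / 4)));
      apply is_derive_scaled; auto; lra.
  - intros u Hu; apply (is_derive_minus (fun u => kp ^ 2 / 4 * G1 (kp ^ 2 * u / 4))
                                        (fun u => ks ^ 2 / 4 * G1 (ks ^ 2 * u / 4)));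
      apply is_derive_scal, is_derive_scaled; auto; lra.
  - intros z Hz; unfold norm2.
    rewrite !HF by (apply Rmult_lt_0_compat; [assumption | apply sqrt_lt_R0, Hz]).
    rewrite !Rpow_mult_distr, pow2_sqrt by (apply Rlt_le, Hz); reflexivity.
Qed.

(** * The fundamental solution in terms of the series *)

Lemma Ci_combination_components m W Jv Yv HJ HY d : m <> 0 -> W <> 0 ->
  (- (Ci / RtoC m) * (RtoC Jv + Ci * RtoC Yv) * RtoC d + Ci / RtoC W * (RtoC HJ + Ci * RtoC HY))%C
  = (Yv * d / m - HY / W, - (Jv * d / m) + HJ / W).
Proof.
  intros Hm HW; unfold Cminus, Cdiv, Cinv, Cmult, Cplus, Copp, RtoC, Ci; cbn [fst snd].
  f_equal; field; lra.
Qed.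

Definition profile_combination (lam mu rho om : R) (x : R * R) (i j : nat) (G G1 G2 : R -> R) : R :=
  let ks := k_s lam mu rho om in
  let kp := k_p lam mu rho om in
  let q := sqnorm x in
  kron i j / (4 * mu) * G (ks ^ 2 * q / 4)
  - (((kp ^ 2) ^ 2 * G2 (kp ^ 2 * q / 4) - (ks ^ 2) ^ 2 * G2 (ks ^ 2 * q / 4)) / 4
       * coord x i * coord x j
     + (kp ^ 2 * G1 (kp ^ 2 * q / 4) - ks ^ 2 * G1 (ks ^ 2 * q / 4)) / 2 * kron i j)
    / (4 * om ^ 2 * rho).

Lemma k_s_pos lam mu rho om : 0 < mu -> 0 < rho -> 0 < om -> 0 < k_s lam mu rho om.
Proof. intros; apply Rdiv_lt_0_compat, sqrt_lt_R0, Rdiv_lt_0_compat; assumption. Qed.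
Lemma k_p_pos lam mu rho om : 0 < 2 * mu + lam -> 0 < rho -> 0 < om -> 0 < k_p lam mu rho om.
Proof. intros; apply Rdiv_lt_0_compat, sqrt_lt_R0, Rdiv_lt_0_compat; lra. Qed.

Lemma k_s_sq lam mu rho om : 0 < mu -> 0 < rho -> k_s lam mu rho om ^ 2 = om ^ 2 * rho / mu.
Proof.
  intros Hmu Hrho; unfold k_s, Rdiv at 1.
  rewrite Rpow_mult_distr, pow_inv, pow2_sqrt by (apply Rlt_le, Rdiv_lt_0_compat; assumption).
  field; lra.
Qed.
Lemma k_p_sq lam mu rho om : 0 < 2 * mu + lam -> 0 < rho ->
  k_p lam mu rho om ^ 2 = om ^ 2 * rho / (2 * mu + lam).
Proof.
  intros HP Hrho; unfold k_p, Rdiv at 1.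
  rewrite Rpow_mult_distr, pow_inv, pow2_sqrt by (apply Rlt_le, Rdiv_lt_0_compat; lra).
  field; lra.
Qed.

Lemma Gamma_om_profiles lam mu rho om x i j :
  0 < mu -> 0 < 2 * mu + lam -> 0 < rho -> 0 < om -> 0 < sqnorm x -> (i < 2)%nat -> (j < 2)%nat ->
  Gamma_om lam mu rho om x i j =
    (profile_combination lam mu rho om x i j Yp Yp1 Yp2,
     - profile_combination lam mu rho om x i j Jp Jp1 Jp2).
Proof.
  intros Hmu HP Hrho Hom Hx Hi Hj.
  pose proof (k_s_pos lam mu rho om Hmu Hrho Hom) as Hks.
  pose proof (k_p_pos lam mu rho om HP Hrho Hom) as Hkp.
  unfold Gamma_om, H0, profile_combination; cbv zeta.
  rewrite (hess_profile_difference J0 Jp Jp1 Jp2), (hess_profile_difference Y0 Yp Yp1 Yp2);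
    auto using J0_Jp, Y0_Yp, is_derive_Jp, is_derive_Jp1, is_derive_Yp, is_derive_Yp1.
  rewrite Ci_combination_components
    by (apply Rgt_not_eq; repeat apply Rmult_lt_0_compat; try apply pow_lt; lra).
  unfold norm2 at 1 2.
  rewrite J0_Jp, Y0_Yp by (apply Rmult_lt_0_compat; [exact Hks | apply sqrt_lt_R0, Hx]).
  rewrite !Rpow_mult_distr, !pow2_sqrt by (unfold sqnorm in Hx; lra).
  change (fst x ^ 2 + snd x ^ 2) with (sqnorm x).
  f_equal; field; lra.
Qed.

Lemma E_c_components : E_c = (2 * euler_gamma - 2 * ln 2, - PI).
Proof. unfold E_c, Cminus, Cmult, Cplus, Copp, RtoC, Ci; cbn [fst snd]; f_equal; ring. Qed.

Lemma expansion_components lam mu rho om x i j : 0 < mu -> 0 < 2 * mu + lam ->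
  let c := 2 * euler_gamma - 2 * ln 2 in
  let G1 := Gamma1 lam mu x i j in
  expansion lam mu rho om x i j =
  (Gamma0 lam mu x i j
   + (alpha1 lam mu * ln (sqrt rho * om) + alpha1 lam mu / 2 * c + alpha2 lam mu / 2
      - / (8 * PI) * (/ mu * ln mu + / (2 * mu + lam) * ln (2 * mu + lam))) * kron i j
   + om ^ 2 * ln om * rho * G1 + om ^ 2 * rho * ln (sqrt rho) * G1
   + om ^ 2 * rho * (((c / 2 - 1) * beta2 lam mu - / 8 * beta3 lam mu
         + / (2 ^ 6 * PI) * (3 / mu ^ 2 * ln mu + / (2 * mu + lam) ^ 2 * ln (2 * mu + lam)))
           * (norm2 x ^ 2 * kron i j)
       + beta2 lam mu * ln (norm2 x) * norm2 x ^ 2 * kron i j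
       + beta3 lam mu * ln (norm2 x) * coord x i * coord x j
       + (/ 4 * (2 * c - 3) * beta3 lam mu
          - / (2 ^ 5 * PI) * (/ mu ^ 2 * ln mu - / (2 * mu + lam) ^ 2 * ln (2 * mu + lam)))
           * (coord x i * coord x j)),
   - PI / 2 * alpha1 lam mu * kron i j
   - PI / 2 * om ^ 2 * rho * (beta2 lam mu * norm2 x ^ 2 * kron i j + beta3 lam mu * coord x i * coord x j)).
Proof.
  intros Hmu HP c G1.
  unfold expansion, gamma_om, alpha, Gamma2, beta1, beta4; rewrite E_c_components.
  fold G1; unfold c.
  generalize (Gamma0 lam mu x i j) G1 (alpha1 lam mu) (alpha2 lam mu) (beta2 lam mu) (beta3 lam mu).
  intros G0 G a1 a2 b2 b3.
  unfold Cminus, Cdiv, Cinv, Cmult, Cplus, Copp, RtoC; cbn [fst snd].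
  pose proof PI_neq0.
  f_equal; field; repeat split; lra.
Qed.

(** [ell] stands for ln ω and [w] for ω²; [w * s0] and [w * p0] are k_s²|x|²/4 and k_p²|x|²/4. *)
Definition remainder_combination (lam mu rho : R) (x : R * R) (i j : nat)
    (R0 R1 R2 : R -> R -> R) (ell w : R) : R :=
  let P := 2 * mu + lam in
  let s0 := rho / mu * sqnorm x / 4 in
  let p0 := rho / P * sqnorm x / 4 in
  let Ls := 2 * ell + ln s0 in
  let Lp := 2 * ell + ln p0 in
  kron i j / (4 * mu) * s0 ^ 2 * R0 Ls (w * s0)
  - coord x i * coord x j / (16 * rho)
      * ((rho / P) ^ 2 * p0 * R2 Lp (w * p0) - (rho / mu) ^ 2 * s0 * R2 Ls (w * s0))
  - kron i j / (8 * rho) * (rho / P * p0 ^ 2 * R1 Lp (w * p0) - rho / mu * s0 ^ 2 * R1 Ls (w * s0)).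

Lemma ex_derive_remainder_combination lam mu rho x i j (R0 R1 R2 : R -> R -> R) ell w :
  (forall L v, ex_derive (R0 L) v) -> (forall L v, ex_derive (R1 L) v) ->
  (forall L v, ex_derive (R2 L) v) ->
  ex_derive (remainder_combination lam mu rho x i j R0 R1 R2 ell) w.
Proof. intros; unfold remainder_combination; auto_derive; repeat split; auto. Qed.

Lemma continuous_remainder_combination_Y lam mu rho x i j ell w :
  continuous (remainder_combination lam mu rho x i j Yrem Yrem1 Yrem2 ell) w.
Proof.
  apply (ex_derive_continuous (K := R_AbsRing) (V := R_NormedModule)), ex_derive_remainder_combination;
    auto using ex_derive_Yrem, ex_derive_Yrem1, ex_derive_Yrem2.
Qed.

Lemma continuous_remainder_combination_J lam mu rho x i j ell w :
  continuous (remainder_combination lam mu rho x i j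
                (fun _ => Jrem) (fun _ => Jrem1) (fun _ => Jrem2) ell) w.
Proof.
  apply (ex_derive_continuous (K := R_AbsRing) (V := R_NormedModule)), ex_derive_remainder_combination;
    auto using ex_derive_Jrem, ex_derive_Jrem1, ex_derive_Jrem2.
Qed.

Lemma remainder_combination_Y_affine lam mu rho x i j ell w :
  remainder_combination lam mu rho x i j Yrem Yrem1 Yrem2 ell w =
  remainder_combination lam mu rho x i j Yrem Yrem1 Yrem2 0 w
  + ell * (remainder_combination lam mu rho x i j Yrem Yrem1 Yrem2 1 w
           - remainder_combination lam mu rho x i j Yrem Yrem1 Yrem2 0 w).
Proof. unfold remainder_combination, Yrem, Yrem1, Yrem2; cbv zeta; ring. Qed.

Lemma ln_sqrt a : 0 < a -> ln (sqrt a) = ln a / 2.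
Proof.
  intros Ha; rewrite <- (sqrt_sqrt a) at 2 by lra.
  rewrite ln_mult by (apply sqrt_lt_R0, Ha); field.
Qed.

Ltac positivity :=
  repeat first [ assumption | lra | apply Rmult_lt_0_compat | apply Rinv_0_lt_compat ].

Lemma residual_identity lam mu rho om x i j :
  0 < mu -> 0 < 2 * mu + lam -> 0 < rho -> 0 < om -> 0 < sqnorm x -> (i < 2)%nat -> (j < 2)%nat ->
  (Gamma_om lam mu rho om x i j - expansion lam mu rho om x i j)%C =
    (om ^ 4 * remainder_combination lam mu rho x i j Yrem Yrem1 Yrem2 (ln om) (om ^ 2),
     om ^ 4 * - remainder_combination lam mu rho x i j
                  (fun _ => Jrem) (fun _ => Jrem1) (fun _ => Jrem2) (ln om) (om ^ 2)).
Proof.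
  intros Hmu HP Hrho Hom Hx Hi Hj.
  rewrite Gamma_om_profiles, expansion_components by assumption.
  unfold profile_combination, remainder_combination; cbv zeta.
  rewrite k_s_sq, k_p_sq by assumption.
  set (q := sqnorm x) in *.
  set (s0 := rho / mu * q / 4); set (p0 := rho / (2 * mu + lam) * q / 4).
  assert (Hs0 : 0 < s0) by (unfold s0; positivity).
  assert (Hp0 : 0 < p0) by (unfold p0; positivity).
  assert (Hw : 0 < om ^ 2) by (apply pow_lt, Hom).
  replace (om ^ 2 * rho / mu * q / 4) with (om ^ 2 * s0) by (unfold s0; field; lra).
  replace (om ^ 2 * rho / (2 * mu + lam) * q / 4) with (om ^ 2 * p0) by (unfold p0; field; lra).
  rewrite Yp_taylor, Yp1_taylor, Yp2_taylor, Yp1_taylor, Yp2_taylor by positivity.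
  rewrite !Jp_taylor, !Jp1_taylor, !Jp2_taylor.
  assert (Hlog : forall c, 0 < c -> ln (om ^ 2 * c) = 2 * ln om + ln c)
    by (intros c Hc; rewrite ln_mult, ln_pow by assumption; simpl INR; ring).
  rewrite !Hlog by assumption.
  unfold Cminus, Cplus, Copp; cbn [fst snd].
  unfold Gamma0, Gamma1, alpha1, alpha2, beta2, beta3.
  assert (Hln4 : ln 4 = 2 * ln 2)
    by (replace 4 with (2 ^ 2) by ring; rewrite ln_pow by lra; simpl INR; ring).
  assert (Hls0 : ln s0 = ln rho - ln mu + ln q - 2 * ln 2)
    by (unfold s0; rewrite ln_div, ln_mult, ln_div, Hln4 by positivity; ring).
  assert (Hlp0 : ln p0 = ln rho - ln (2 * mu + lam) + ln q - 2 * ln 2)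
    by (unfold p0; rewrite ln_div, ln_mult, ln_div, Hln4 by positivity; ring).
  assert (Hnx : norm2 x ^ 2 = q)
    by (unfold norm2, q, sqnorm; rewrite pow2_sqrt; [reflexivity | exact (Rlt_le _ _ Hx)]).
  assert (Hlx : ln (norm2 x) = ln q / 2) by (apply ln_sqrt, Hx).
  rewrite Hls0, Hlp0, Hnx, Hlx, ln_mult, !ln_sqrt by (try apply sqrt_lt_R0; assumption).
  unfold s0, p0.
  pose proof PI_neq0.
  f_equal; field; repeat split; lra.
Qed.

(** * Estimating the remainder *)

Lemma continuous_bounded_near (f : R -> R) x :
  continuous f x -> exists M e, 0 < e /\ forall y, Rabs (y - x) < e -> Rabs (f y) <= M.
Proof.
  intros Hc.
  destruct (Hc _ (locally_ball (f x) (mkposreal 1 Rlt_0_1))) as [e He].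
  exists (Rabs (f x) + 1), e; split; [apply cond_pos|].
  intros y Hy; specialize (He y Hy).
  change (Rabs (f y - f x) < 1) in He.
  pose proof (Rabs_triang_inv (f y) (f x)); lra.
Qed.

Lemma Cmod_le_abs_sum a b : Cmod (a, b) <= Rabs a + Rabs b.
Proof.
  unfold Cmod; cbn [fst snd].
  pose proof (Rabs_pos a); pose proof (Rabs_pos b).
  rewrite <- (sqrt_pow2 (Rabs a + Rabs b)) by lra.
  apply sqrt_le_1_alt.
  rewrite <- (pow2_abs a), <- (pow2_abs b); nra.
Qed.

Lemma small_om_log_estimate om a b c M :
  0 < om < exp (-2) -> Rabs a <= M -> Rabs b <= M -> Rabs c <= M ->
  Cmod (om ^ 4 * (a + ln om * b), om ^ 4 * c) <= 4 * M * Rabs (om ^ 4 * ln om + om ^ 4).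
Proof.
  intros [Hom Hexp] Ha Hb Hc.
  set (t := - ln om).
  assert (Ht : 2 <= t).
  { assert (ln om < -2) by (rewrite <- (ln_exp (-2)); apply ln_increasing; lra).
    unfold t; lra. }
  assert (Hom4 : 0 < om ^ 4) by (apply pow_lt, Hom).
  assert (HM : 0 <= M) by (eapply Rle_trans; [apply Rabs_pos | exact Ha]).
  replace (om ^ 4 * ln om + om ^ 4) with (- (om ^ 4 * (t - 1))) by (unfold t; ring).
  rewrite Rabs_Ropp, Rabs_right by nra.
  eapply Rle_trans; [apply Cmod_le_abs_sum|].
  rewrite !Rabs_mult, (Rabs_right (om ^ 4)) by lra.
  assert (Hsum : Rabs (a + ln om * b) <= M + t * M).
  { eapply Rle_trans; [apply Rabs_triang|].
    rewrite Rabs_mult, (Rabs_left (ln om)) by (unfold t in *; lra).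
    apply Rplus_le_compat; [exact Ha|].
    apply Rmult_le_compat_l; [unfold t in *; lra | exact Hb]. }
  assert (M + t * M + M <= 4 * M * (t - 1)) by nra.
  nra.
Qed.

Lemma log_order_bound (U V W : R -> R) :
  continuous U 0 -> continuous V 0 -> continuous W 0 ->
  exists C delta, 0 < delta /\ forall om, 0 < om < delta ->
    Cmod (om ^ 4 * (U (om ^ 2) + ln om * V (om ^ 2)), om ^ 4 * W (om ^ 2))
      <= C * Rabs (om ^ 4 * ln om + om ^ 4).
Proof.
  intros HU HV HW.
  destruct (continuous_bounded_near U 0 HU) as [MU [eU [HeU BU]]].
  destruct (continuous_bounded_near V 0 HV) as [MV [eV [HeV BV]]].
  destruct (continuous_bounded_near W 0 HW) as [MW [eW [HeW BW]]].
  set (M := Rabs MU + Rabs MV + Rabs MW).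
  pose proof (Rle_abs MU); pose proof (Rle_abs MV); pose proof (Rle_abs MW).
  pose proof (Rabs_pos MU); pose proof (Rabs_pos MV); pose proof (Rabs_pos MW).
  exists (4 * M), (Rmin (exp (-2)) (Rmin eU (Rmin eV eW))); split.
  { repeat apply Rmin_pos; auto; apply exp_pos. }
  intros om [Hom Hdelta].
  pose proof (Rmin_l (exp (-2)) (Rmin eU (Rmin eV eW))).
  pose proof (Rmin_r (exp (-2)) (Rmin eU (Rmin eV eW))).
  pose proof (Rmin_l eU (Rmin eV eW)); pose proof (Rmin_r eU (Rmin eV eW)).
  pose proof (Rmin_l eV eW); pose proof (Rmin_r eV eW).
  assert (Hexp : exp (-2) < 1) by (rewrite <- exp_0; apply exp_increasing; lra).
  assert (Hsq : Rabs (om ^ 2 - 0) < om) by (rewrite Rminus_0_r, Rabs_right by nra; nra).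
  specialize (BU (om ^ 2) ltac:(lra)); specialize (BV (om ^ 2) ltac:(lra));
    specialize (BW (om ^ 2) ltac:(lra)).
  apply small_om_log_estimate; unfold M; lra.
Qed.

Lemma uniform_in_indices (F : nat -> nat -> R -> R) (g : R -> R) :
  (forall om, 0 <= g om) ->
  (forall i j, (i < 2)%nat -> (j < 2)%nat ->
     exists C delta, 0 < delta /\ forall om, 0 < om < delta -> F i j om <= C * g om) ->
  exists C delta, 0 < delta /\ forall om, 0 < om < delta ->
    forall i j, (i < 2)%nat -> (j < 2)%nat -> F i j om <= C * g om.
Proof.
  intros Hg H.
  destruct (H 0 0 ltac:(lia) ltac:(lia))%nat as [C00 [d00 [Hd00 H00]]].
  destruct (H 0 1 ltac:(lia) ltac:(lia))%nat as [C01 [d01 [Hd01 H01]]].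
  destruct (H 1 0 ltac:(lia) ltac:(lia))%nat as [C10 [d10 [Hd10 H10]]].
  destruct (H 1 1 ltac:(lia) ltac:(lia))%nat as [C11 [d11 [Hd11 H11]]].
  pose proof (Rmax_l (Rmax C00 C01) (Rmax C10 C11)); pose proof (Rmax_r (Rmax C00 C01) (Rmax C10 C11)).
  pose proof (Rmax_l C00 C01); pose proof (Rmax_r C00 C01).
  pose proof (Rmax_l C10 C11); pose proof (Rmax_r C10 C11).
  pose proof (Rmin_l (Rmin d00 d01) (Rmin d10 d11)); pose proof (Rmin_r (Rmin d00 d01) (Rmin d10 d11)).
  pose proof (Rmin_l d00 d01); pose proof (Rmin_r d00 d01).
  pose proof (Rmin_l d10 d11); pose proof (Rmin_r d10 d11).
  set (C := Rmax (Rmax C00 C01) (Rmax C10 C11)) in *.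
  set (d := Rmin (Rmin d00 d01) (Rmin d10 d11)) in *.
  exists C, d; split; [repeat apply Rmin_pos; assumption|].
  intros om [Hom Hd] i j Hi Hj.
  assert (HC : forall Cij, Cij <= C -> Cij * g om <= C * g om)
    by (intros; apply Rmult_le_compat_r; auto).
  destruct i as [|[|]]; destruct j as [|[|]]; try lia; eapply Rle_trans;
    [apply H00 | | apply H01 | | apply H10 | | apply H11 | ]; solve [lra | apply HC; lra].
Qed.

Theorem proposition2p2 :
  forall (lam mu rho : R), 0 < mu -> 0 < 2 * mu + lam -> 0 < rho ->
  forall x : R * R, x <> (0, 0) ->
  exists C0 delta : R, 0 < delta /\
    forall om : R, 0 < om < delta ->
    forall i j : nat, (i < 2)%nat -> (j < 2)%nat ->
      Cmod (Gamma_om lam mu rho om x i j - expansion lam mu rho om x i j)%C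
        <= C0 * Rabs (om ^ 4 * ln om + om ^ 4).
Proof.
  intros lam mu rho Hmu HP Hrho x Hx.
  pose proof (sqnorm_pos x Hx) as Hq.
  apply (uniform_in_indices
           (fun i j om => Cmod (Gamma_om lam mu rho om x i j - expansion lam mu rho om x i j)%C)
           (fun om => Rabs (om ^ 4 * ln om + om ^ 4))); [intros; apply Rabs_pos|].
  intros i j Hi Hj.
  set (RY := remainder_combination lam mu rho x i j Yrem Yrem1 Yrem2).
  set (RJ := remainder_combination lam mu rho x i j (fun _ => Jrem) (fun _ => Jrem1) (fun _ => Jrem2)).
  destruct (log_order_bound (RY 0) (fun w => RY 1 w - RY 0 w) (fun w => - RJ 0 w))
    as [C [delta [Hdelta HC]]].
  { apply continuous_remainder_combination_Y. }
  { apply (continuous_minus (V := R_NormedModule)); apply continuous_remainder_combination_Y. }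
  { apply (continuous_opp (V := R_NormedModule)), continuous_remainder_combination_J. }
  exists C, delta; split; [exact Hdelta|]; intros om Hom.
  rewrite residual_identity by (tauto || lra).
  fold RY RJ.
  replace (RY (ln om) (om ^ 2)) with (RY 0 (om ^ 2) + ln om * (RY 1 (om ^ 2) - RY 0 (om ^ 2)))
    by (symmetry; apply remainder_combination_Y_affine).
  apply HC, Hom.
Qed.
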